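(* Let $S=(\mathcal{E},\Sigma,X,\mathcal{O})$ be an entity. Then $S$ is central atomic (i.e. for $(e,p),(f,q)\in\mathcal{E}\times\Sigma$, $O(e,p)\subseteq O(f,q)$ implies $(e,p)=(f,q)$) if and only if the central eigen closure operator $cl_{eig}$ on $\mathcal{E}\times\Sigma$ satisfies the $T_1$ separation axiom.
   Context: An entity $S=(\mathcal{E},\Sigma,X,\mathcal{O})$ consists of a set $\mathcal{E}$, a set $\Sigma$, and for each $e\in\mathcal{E}$, $p\in\Sigma$ a nonempty set $O(e,p)$, with $X=\bigcup_{e,p}O(e,p)$. The central eigen map $eig:\mathcal{P}(X)\to\mathcal{P}(\mathcal{E}\times\Sigma)$ is $(e,p)\in eig(A)\iff O(e,p)\subseteq A$; $\mathcal{Y}_{eig}=\{eig(A):A\subseteq X\}$ and $cl_{eig}(K)=\bigcap\{Y\in\mathcal{Y}_{eig}:K\subseteq Y\}$. A closure operator $cl$ on $W$ satisfies $T_1$ iff $cl(\{w\})=\{w\}$ for every $w\in W$. *)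

From Stdlib Require Import Classical.

(* An entity S = (E, Sigma, X, O): types Ent (= \mathcal E), Sig (= Sigma),
   outcome type Xt, and O : Ent -> Sig -> set of outcomes.  The set X is
   represented by the predicate X on Xt. *)
Record entity := {
  Ent : Type;
  Sig : Type;
  Xt : Type;
  X : Xt -> Prop;
  O : Ent -> Sig -> Xt -> Prop;
  O_nonempty : forall e p, exists x, O e p x;
  X_union : forall x, X x <-> exists e p, O e p x
}.

Definition subset {T : Type} (A B : T -> Prop) : Prop := forall x, A x -> B x.

Definition eig (S : entity) (A : Xt S -> Prop) : Ent S * Sig S -> Prop :=
  fun ep => subset (O S (fst ep) (snd ep)) A.

Definition Y_eig (S : entity) (Y : Ent S * Sig S -> Prop) : Prop :=
  exists A : Xt S -> Prop, subset A (X S) /\ (forall w, Y w <-> eig S A w).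

Definition cl_eig (S : entity) (K : Ent S * Sig S -> Prop) : Ent S * Sig S -> Prop :=
  fun w => forall Y, Y_eig S Y -> subset K Y -> Y w.

Definition T1 {W : Type} (cl : (W -> Prop) -> W -> Prop) : Prop :=
  forall w z : W, cl (fun u => u = w) z <-> z = w.

Definition central_atomic (S : entity) : Prop :=
  forall (e f : Ent S) (p q : Sig S),
    subset (O S e p) (O S f q) -> (e, p) = (f, q).

(* The closure of a singleton {(f,q)} is the set of all (e,p) with
   O(e,p) ⊆ O(f,q): it is contained in eig(O(f,q)), and every eig(A) that
   contains (f,q) contains each such (e,p).  Hence T1 says precisely that
   O(e,p) ⊆ O(f,q) forces (e,p) = (f,q). *)

Lemma subset_refl {T : Type} (A : T -> Prop) : subset A A.
Proof. intros x Hx; exact Hx. Qed.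

Lemma subset_trans {T : Type} (A B C : T -> Prop) :
  subset A B -> subset B C -> subset A C.
Proof. intros HAB HBC x Hx; apply HBC, HAB, Hx. Qed.

Lemma O_subset_X (S : entity) (e : Ent S) (p : Sig S) : subset (O S e p) (X S).
Proof. intros x Hx; apply (X_union S x); exists e, p; exact Hx. Qed.

Lemma eig_Y_eig (S : entity) (A : Xt S -> Prop) :
  subset A (X S) -> Y_eig S (eig S A).
Proof. intros HA; exists A; split; [exact HA | intros w; tauto]. Qed.

Lemma Y_eig_O_antitone (S : entity) (Y : Ent S * Sig S -> Prop) (v w : Ent S * Sig S) :
  Y_eig S Y -> subset (O S (fst v) (snd v)) (O S (fst w) (snd w)) -> Y w -> Y v.
Proof.
  intros [A [_ HY]] Hvw Hw.
  apply HY; apply HY in Hw.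
  exact (subset_trans _ _ _ Hvw Hw).
Qed.

Lemma cl_eig_singleton (S : entity) (w z : Ent S * Sig S) :
  cl_eig S (fun u => u = w) z <-> subset (O S (fst z) (snd z)) (O S (fst w) (snd w)).
Proof.
  split.
  - intros Hz.
    apply (Hz (eig S (O S (fst w) (snd w)))).
    + apply eig_Y_eig, O_subset_X.
    + intros u ->; apply subset_refl.
  - intros Hzw Y HY HwY.
    apply (Y_eig_O_antitone S Y z w HY Hzw), HwY; reflexivity.
Qed.

Theorem mainTheorem4 (S : entity) :
  central_atomic S <-> T1 (cl_eig S).
Proof.
  split.
  - intros Hatomic w z; rewrite cl_eig_singleton; split.
    + destruct z as [e p], w as [f q]; apply Hatomic.
    + intros ->; apply subset_refl.
  - intros HT1 e f p q Hsub.
    apply (proj1 (HT1 (f, q) (e, p))), (proj2 (cl_eig_singleton S (f, q) (e, p))).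
    exact Hsub.
Qed.
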